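(* Let $F$ be a field and $R$ a Rota–Baxter operator of nonzero weight on $M_n(F)$ such that $R(1)$ is a diagonal matrix whose diagonal entries take exactly $k$ distinct values $\lambda_1,\dots,\lambda_k$, arranged in consecutive blocks: there are $0=s_0<s_1<\dots<s_k=n$ with the $(i,i)$ entry equal to $\lambda_j$ for $s_{j-1}+1\le i\le s_j$. Let $B_j=\mathrm{Span}\{e_{st}\mid s_{j-1}+1\le s,t\le s_j\}$ and $B=B_1\oplus\dots\oplus B_k$. Then $B$ is a subalgebra of $M_n(F)$ with $R(B)\subseteq B$. If $k=n$, then $R$ is diagonal.
   Context: $e_{st}$ denote matrix units. A linear operator $R$ on an algebra $A$ is a Rota–Baxter operator of weight $\lambda$ if $R(x)R(y)=R(R(x)y+xR(y)+\lambda xy)$ for all $x,y$. An RB-operator $R$ on $M_n(F)$ is called diagonal if there is $\psi\in\mathrm{Aut}(M_n(F))$ with $\psi^{-1}R\psi(D_n)\subseteq D_n$, where $D_n$ is the subalgebra of diagonal matrices. *)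

From HB Require Import structures.
From mathcomp Require Import all_boot all_order all_algebra.
Set Implicit Arguments. Unset Strict Implicit. Unset Printing Implicit Defensive.
Import GRing.Theory.
Local Open Scope ring_scope.

(* Rota-Baxter operator of weight w on M_n(F) (R is assumed linear separately). *)
Definition is_RB (F : fieldType) (n : nat) (R : 'M[F]_n -> 'M[F]_n) (w : F) :=
  forall x y : 'M[F]_n,
    R x *m R y = R (R x *m y + x *m R y + w *: (x *m y)).

(* Membership in B = B_1 (+) ... (+) B_k, where B_j is spanned by the matrix
   units e_st with s_{j-1} <= s,t < s_j (0-based indices).  A matrix lies in
   this span iff all its entries outside the diagonal blocks vanish. *)
Definition inB (F : fieldType) (n : nat) (s : nat -> nat) (k : nat)
    (A : 'M[F]_n) : Prop :=
  forall i j : 'I_n, A i j != 0 ->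
    exists2 b : nat, (1 <= b <= k)%N &
      (s b.-1 <= i < s b)%N /\ (s b.-1 <= j < s b)%N.

Definition is_alg_aut (F : fieldType) (n : nat) (psi : 'M[F]_n -> 'M[F]_n) :=
  [/\ linear psi,
      forall x y : 'M[F]_n, psi (x *m y) = psi x *m psi y,
      psi 1%:M = 1%:M & bijective psi].

Definition RB_diagonal (F : fieldType) (n : nat) (R : 'M[F]_n -> 'M[F]_n) :=
  exists psi psi' : 'M[F]_n -> 'M[F]_n,
    [/\ is_alg_aut psi, cancel psi psi', cancel psi' psi &
        forall D : 'M[F]_n, is_diag_mx D -> is_diag_mx (psi' (R (psi D)))].

(* The diagonal matrix a := R(1) controls everything: since its diagonal entries
   are distinct from block to block, a matrix lies in B exactly when it commutes
   with a, so B is the commutant of a and in particular a subalgebra.  Expanding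
   the Rota-Baxter identity for the pairs (A, 1) and (1, A) gives
   R(A) a - a R(A) = R(A a - a A), whence R preserves the commutant.  When k = n
   the blocks are singletons, so B = D_n and the identity automorphism shows that
   R is diagonal.  Neither step uses that the weight is nonzero. *)
From HB Require Import structures.
From mathcomp Require Import all_boot all_order all_algebra.
From mathcomp Require Import zify.
Set Implicit Arguments.
Unset Strict Implicit.

Import GRing.Theory.
Local Open Scope ring_scope.

Section DiagonalCommutant.

Variables (F : fieldType) (n : nat) (D : 'M[F]_n).
Hypothesis diagD : is_diag_mx D.

Lemma mulmx_diagE (A : 'M[F]_n) i j : (A *m D) i j = A i j * D j j.
Proof.
move/is_diag_mxP: diagD => D0; rewrite mxE (bigD1 j) //= big1 ?addr0 // => l /eqP ne_lj.
by rewrite D0 ?mulr0 //; apply/eqP => /val_inj.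
Qed.

Lemma diag_mulmxE (A : 'M[F]_n) i j : (D *m A) i j = D i i * A i j.
Proof.
move/is_diag_mxP: diagD => D0; rewrite mxE (bigD1 i) //= big1 ?addr0 // => l /eqP ne_li.
by rewrite D0 ?mul0r //; apply/eqP => /val_inj /esym.
Qed.

Lemma comm_diag_mxP (A : 'M[F]_n) :
  comm_mx D A <-> forall i j, A i j != 0 -> D i i = D j j.
Proof.
split=> [DA i j nzAij | sameD].
  have := congr1 (fun M : 'M[F]_n => M i j) DA.
  by rewrite /= diag_mulmxE mulmx_diagE [_ * D j j]mulrC; apply: mulIf.
apply/matrixP=> i j; rewrite diag_mulmxE mulmx_diagE.
have [->|/sameD->] := eqVneq (A i j) 0; first by rewrite mulr0 mul0r.
exact: mulrC.
Qed.

End DiagonalCommutant.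

Section RotaBaxterUnit.

Variables (F : fieldType) (n : nat) (R : {linear 'M[F]_n -> 'M[F]_n}) (w : F).
Hypothesis RB_R : is_RB R w.

Lemma RB_commutator_R1 (A : 'M[F]_n) :
  R 1%:M *m R A - R A *m R 1%:M = R (R 1%:M *m A - A *m R 1%:M).
Proof.
rewrite RB_R [R A *m _]RB_R !mulmx1 !mul1mx -linearB /=.
by congr (R _); rewrite [R A + _ + _]addrC !addrKA.
Qed.

Lemma RB_comm_R1 (A : 'M[F]_n) :
  comm_mx (R 1%:M) A -> comm_mx (R 1%:M) (R A).
Proof.
move=> comm_A; apply/eqP; rewrite -subr_eq0 RB_commutator_R1 comm_A.
by rewrite subrr linear0.
Qed.

End RotaBaxterUnit.

Lemma exists_block (s : nat -> nat) (m i : nat) :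
  s 0%N = 0%N -> (i < s m)%N ->
  exists2 b : nat, (1 <= b <= m)%N & (s b.-1 <= i < s b)%N.
Proof.
move=> s0; elim: m => [|m IHm] lt_i_sm; first by rewrite s0 in lt_i_sm.
have [/IHm[b /andP[b_gt0 le_bm] blk_i] | le_sm_i] := ltnP i (s m).
  by exists b => //; rewrite b_gt0 leqW.
by exists m.+1 => //=; rewrite le_sm_i.
Qed.

Section BlockCommutant.

Variables (F : fieldType) (n k : nat) (s : nat -> nat) (lam : nat -> F).
Variable a : 'M[F]_n.
Hypotheses (s0 : s 0%N = 0%N) (sk : s k = n).
Hypothesis lam_inj : forall j1 j2, (1 <= j1 <= k)%N -> (1 <= j2 <= k)%N ->
  lam j1 = lam j2 -> j1 = j2.
Hypothesis a_blocks : forall (j : nat) (i : 'I_n),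
  (1 <= j <= k)%N -> (s j.-1 <= i < s j)%N -> a i i = lam j.

Lemma inB_sameP (A : 'M[F]_n) :
  inB s k A <-> forall i j, A i j != 0 -> a i i = a j j.
Proof.
have block_of (i : 'I_n) : exists2 b, (1 <= b <= k)%N & (s b.-1 <= i < s b)%N.
  by apply: exists_block; rewrite ?sk.
split=> [inB_A i j /inB_A[b kb [ib jb]] | sameA i j /[dup] nzAij /sameA].
  by rewrite (a_blocks kb ib) (a_blocks kb jb).
have [bi kbi ibi] := block_of i; have [bj kbj jbj] := block_of j.
rewrite (a_blocks kbi ibi) (a_blocks kbj jbj) => /lam_inj eq_b.
by exists bi => //; rewrite [in X in _ /\ X]eq_b.
Qed.

Hypothesis diag_a : is_diag_mx a.

Lemma inB_commP (A : 'M[F]_n) : inB s k A <-> comm_mx a A.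
Proof. by rewrite inB_sameP; split=> /comm_diag_mxP; apply. Qed.

End BlockCommutant.

Section StrictlyIncreasing.

Variables (s : nat -> nat) (n : nat).
Hypothesis s_incr : forall j, (j < n)%N -> (s j < s j.+1)%N.

Lemma strictly_increasing_gap (i d : nat) :
  (i + d <= n)%N -> (s i + d <= s (i + d))%N.
Proof.
elim: d => [|d IHd] le_n; first by rewrite !addn0.
rewrite !addnS in le_n *; exact: leq_ltn_trans (IHd (ltnW le_n)) (s_incr le_n).
Qed.

Lemma strictly_increasing_id : s 0%N = 0%N -> s n = n ->
  forall j, (j <= n)%N -> s j = j.
Proof.
move=> s0 sn j le_jn.
have le_j_sj : (j <= s j)%N.
  by have := @strictly_increasing_gap 0 j; rewrite s0 add0n; apply.
have := @strictly_increasing_gap j (n - j); rewrite subnKC // sn => /(_ (leqnn n)).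
rewrite -{2}(subnKC le_jn) leq_add2r => le_sj_j.
by apply/eqP; rewrite eqn_leq le_sj_j.
Qed.

End StrictlyIncreasing.

Lemma inB_id_diag (F : fieldType) (n : nat) (s : nat -> nat) :
  (forall j, (j <= n)%N -> s j = j) ->
  forall A : 'M[F]_n, inB s n A <-> is_diag_mx A.
Proof.
move=> s_id A; split=> [inB_A | /is_diag_mxP diagA i j nzAij].
  apply/is_diag_mxP => i j ne_ij; apply/eqP; apply: contraNT ne_ij.
  move=> /inB_A[b /andP[b_gt0 le_bn]].
  have le_pb_n : (b.-1 <= n)%N := leq_trans (leq_pred b) le_bn.
  rewrite !s_id // => -[/andP[ge_i lt_i] /andP[ge_j lt_j]].
  by apply/eqP; lia.
have eq_ij : i = j :> nat by apply: contraNeq nzAij => /diagA ->.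
have lt_in := ltn_ord i; have le_in := ltnW lt_in.
by exists i.+1; rewrite ?lt_in // !s_id //= -eq_ij leqnn ltnSn.
Qed.

Lemma RB_diagonal_id (F : fieldType) (n : nat) (R : 'M[F]_n -> 'M[F]_n) :
  (forall D, is_diag_mx D -> is_diag_mx (R D)) -> RB_diagonal R.
Proof.
move=> R_diag; exists id, id; split=> //.
by split=> //; exists id.
Qed.

Theorem proposition2 (F : fieldType) (n : nat)
    (R : {linear 'M[F]_n -> 'M[F]_n}) (w : F)
    (k : nat) (s : nat -> nat) (lam : nat -> F) :
  w != 0 ->
  is_RB R w ->
  s 0%N = 0%N -> (forall j, (j < k)%N -> (s j < s j.+1)%N) -> s k = n ->
  (forall j1 j2, (1 <= j1 <= k)%N -> (1 <= j2 <= k)%N ->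
      lam j1 = lam j2 -> j1 = j2) ->
  is_diag_mx (R 1%:M) ->
  (forall (j : nat) (i : 'I_n), (1 <= j <= k)%N -> (s j.-1 <= i < s j)%N ->
      R 1%:M i i = lam j) ->
  ([/\ inB s k (1%:M : 'M[F]_n),
      (forall A B : 'M[F]_n, inB s k A -> inB s k B -> inB s k (A + B)),
      (forall (a : F) (A : 'M[F]_n), inB s k A -> inB s k (a *: A)),
      (forall A B : 'M[F]_n, inB s k A -> inB s k B -> inB s k (A *m B)) &
      (forall A : 'M[F]_n, inB s k A -> inB s k (R A))] /\
   (k = n -> RB_diagonal R)).
Proof.
move=> _ RB_R s0 s_incr sk lam_inj diag_R1 R1_blocks.
have inBP A : inB s k A <-> comm_mx (R 1%:M) A :=
  inB_commP s0 sk lam_inj R1_blocks diag_R1 A.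
have inB_R A : inB s k A -> inB s k (R A) by move=> /inBP /(RB_comm_R1 RB_R) /inBP.
split.
  split=> [|A B /inBP comm_A /inBP comm_B|c A /inBP comm_A|A B /inBP comm_A /inBP comm_B|//].
  - exact/inBP/comm_mx1.
  - exact/inBP/comm_mxD.
  - by apply/inBP; rewrite -mul_scalar_mx; apply: comm_mxM (comm_mx_scalar _ _) comm_A.
  - exact/inBP/comm_mxM.
move=> kn; subst k.
have s_id := strictly_increasing_id s_incr s0 sk.
apply: RB_diagonal_id => D diag_D.
by apply/(inB_id_diag s_id)/inB_R/(inB_id_diag s_id).
Qed.
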